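(* In the resource theory of unital maps on a $d$-dimensional Hilbert space, with the currency $\mathcal C=\{C^k\}_{k=1}^d\cup\{\Omega\}$, $C^k=\{\Pi^k/k\}$, $\mathrm{Val}(C^k)=\log d-\log k$, $\mathrm{Val}(\Omega)=0$, the yield of any specification $V\in S^\Omega$ is $$\mathrm{Yield}(V)=\log d-\max_{\rho\in V^{\mathrm P}}H_0(\rho),$$ where $V^{\mathrm P}$ is the convex hull of $V$.
   Context: $\Omega$ is the set of all density operators on a Hilbert space $\mathcal H$ of dimension $d$ with fixed orthonormal basis $\{\ket i\}_{i=1}^d$; $S^\Omega$ is the set of non-empty subsets of $\Omega$; $\Pi^k=\sum_{i=1}^k\ket i\bra i$. Allowed transformations: $f_{\mathcal E}(V)=\{\mathcal E(\rho):\rho\in V\}$ for unital CPTP maps $\mathcal E$; $V\to W$ iff some unital CPTP $\mathcal E$ has $\mathcal E(\rho)\in W$ for all $\rho\in V$. $\mathrm{Yield}(V)=\sup\{\mathrm{Val}(C):C\in\mathcal C,\ V\to C\}$. $H_0(\rho)=\log\operatorname{rank}(\rho)$; logarithms are base 2. The convex hull $V^{\mathrm P}$ is the set of all finite convex combinations of elements of $V$. *)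

From HB Require Import structures.
From mathcomp Require Import all_boot all_order all_algebra.
From mathcomp Require Import spectral.
From Stdlib Require Import Reals.
Set Implicit Arguments. Unset Strict Implicit. Unset Printing Implicit Defensive.
Import Order.TTheory GRing.Theory Num.Theory.
Local Open Scope ring_scope.
Local Open Scope sesquilinear_scope.

Section QRT.
Variable C : numClosedFieldType.
Variable d : nat.

Definition psd (A : 'M[C]_d) : Prop :=
  A ^t* = A /\ forall v : 'rV[C]_d, 0 <= (v *m A *m v ^t*) ord0 ord0.

Definition density (rho : 'M[C]_d) : Prop := psd rho /\ \tr rho = 1.

Definition spec (V : 'M[C]_d -> Prop) : Prop :=
  (forall rho, V rho -> density rho) /\ (exists rho, V rho).

(* unital CPTP maps, given in Kraus form E(rho) = sum_i K_i rho K_i^* with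
   sum_i K_i^* K_i = 1 (trace preserving) and sum_i K_i K_i^* = 1 (unital) *)
Definition unital_cptp (E : 'M[C]_d -> 'M[C]_d) : Prop :=
  exists (n : nat) (K : 'I_n -> 'M[C]_d),
    \sum_(i < n) ((K i) ^t* *m K i) = 1%:M /\
    \sum_(i < n) (K i *m (K i) ^t*) = 1%:M /\
    forall rho, E rho = \sum_(i < n) (K i *m rho *m (K i) ^t*).

Definition converts (V W : 'M[C]_d -> Prop) : Prop :=
  exists E, unital_cptp E /\ forall rho, V rho -> W (E rho).

Definition Pi (k : nat) : 'M[C]_d := pid_mx k.

Inductive currency := CurK of nat | CurOmega.

Definition valid_currency (c : currency) : Prop :=
  match c with CurK k => leq 1 k && leq k d | CurOmega => True end.

Definition currency_set (c : currency) : 'M[C]_d -> Prop :=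
  match c with
  | CurK k => fun rho => rho = (k%:R)^-1 *: Pi k
  | CurOmega => density
  end.

Definition conv_hull (V : 'M[C]_d -> Prop) (rho : 'M[C]_d) : Prop :=
  exists (n : nat) (w : 'I_n -> C) (r : 'I_n -> 'M[C]_d),
    (forall i, 0 <= w i) /\ \sum_(i < n) w i = 1 /\
    (forall i, V (r i)) /\ rho = \sum_(i < n) (w i *: r i).
End QRT.

Definition log2 (x : R) : R := Rdiv (ln x) (ln 2).

Definition Val (d : nat) (c : currency) : R :=
  match c with
  | CurK k => Rminus (log2 (INR d)) (log2 (INR k))
  | CurOmega => 0%R
  end.

(* the set whose supremum is Yield(V) *)
Definition yield_set (C : numClosedFieldType) (d : nat) (V : 'M[C]_d -> Prop)
  (y : R) : Prop :=
  exists c, valid_currency d c /\ converts V (@currency_set C d c) /\ y = Val d c.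

Definition H0 (C : numClosedFieldType) (d : nat) (rho : 'M[C]_d) : R :=
  log2 (INR (\rank rho)).

From mathcomp Require Import all_boot all_order all_algebra spectral zify.
From mathcomp Require Import boolp.
Set Implicit Arguments. Unset Strict Implicit. Unset Printing Implicit Defensive.
Import Order.TTheory GRing.Theory Num.Theory.

(* Take rho0 of maximal rank r in the convex hull of V.  If some state of V had
   weight outside the support of rho0, the midpoint of the two would lie in the
   hull and have larger rank; so every state of V lives on the support of rho0,
   and measuring in the eigenbasis of rho0 followed by a doubly stochastic
   relabelling of the outcomes is a unital channel sending all of V to Pi^r/r.
   Conversely, a unital channel E sending V, hence rho0, to Pi^k/k has an adjoint
   mapping the projection onto ker Pi^k to a contraction of trace d - k that
   vanishes on the support of rho0, so d - k <= d - r. *)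

Section ConjugateTranspose.
Local Open Scope ring_scope.
Local Open Scope sesquilinear_scope.
Variable C : numClosedFieldType.

Lemma trmxC_mul m n p (A : 'M[C]_(m, n)) (B : 'M[C]_(n, p)) :
  (A *m B)^t* = B^t* *m A^t*.
Proof. by rewrite trmx_mul map_mxM. Qed.

Lemma trmxCZ m n (a : C) (A : 'M[C]_(m, n)) : (a *: A)^t* = a^* *: A^t*.
Proof. by rewrite linearZ map_mxZ. Qed.

Lemma trmxC_delta m n (i : 'I_m) (j : 'I_n) :
  (delta_mx i j)^t* = delta_mx j i :> 'M[C]_(n, m).
Proof. by rewrite trmx_delta map_delta_mx. Qed.

Lemma mul_trmxC_ge0 n (u : 'rV[C]_n) : 0 <= (u *m u^t*) 0 0.
Proof. by rewrite mxE sumr_ge0 // => i _; rewrite !mxE mul_conjC_ge0. Qed.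

Lemma sqrtC_mul_conj (x : C) : 0 <= x -> sqrtC x * (sqrtC x)^* = x.
Proof. by move=> x0; rewrite conj_Creal ?sqrtC_real // -expr2 sqrtCK. Qed.

End ConjugateTranspose.

Section MatrixUnits.
Local Open Scope ring_scope.
Variables (R : comPzRingType) (d : nat).

Lemma mx1_sum_delta : 1%:M = \sum_j delta_mx j j :> 'M[R]_d.
Proof.
by rewrite -diag_const_mx diag_mx_sum_delta; apply: eq_bigr => j _; rewrite mxE scale1r.
Qed.

Lemma delta_mx_conj (i j : 'I_d) (X : 'M[R]_d) :
  delta_mx i j *m X *m delta_mx j i = X j j *: delta_mx i i.
Proof.
apply/matrixP=> a b; rewrite !mxE (bigD1 j) //= big1 ?addr0 => [|c /negbTE cj].
  rewrite !mxE (bigD1 j) //= big1 ?addr0 => [|c /negbTE cj].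
    rewrite !mxE !eqxx andbT.
    by case: (a == i); case: (b == i); rewrite /= ?mulr1 ?mulr0 ?mul1r ?mul0r.
  by rewrite !mxE cj andbF mul0r.
by rewrite !mxE cj /= mulr0.
Qed.

Lemma mxtrace_pid (k : nat) : (k <= d)%N -> \tr (pid_mx k : 'M[R]_d) = k%:R.
Proof.
move=> kd; have -> : pid_mx k = (pid_mx k : 'M[R]_(d, k)) *m (pid_mx k : 'M_(k, d)).
  by rewrite mul_pid_mx !minnn.
by rewrite mxtrace_mulC mul_pid_mx !minnn (minn_idPr kd) pid_mx_1 mxtrace1.
Qed.

Lemma pid_mx_indicator (r : nat) :
  pid_mx r = diag_mx (\row_i ((i \in [set i : 'I_d | (i < r)%N])%:R)) :> 'M[R]_d.
Proof.
apply/matrixP=> a b; rewrite !mxE inE.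
by case: (a =P b) => [->|/eqP ab]; rewrite ?eqxx // (inj_eq val_inj) (negbTE ab).
Qed.

Lemma sum_indicator (A : {set 'I_d}) : \sum_j ((j \in A)%:R : R) = #|A|%:R.
Proof.
rewrite -sum1_card natr_sum [RHS]big_mkcond.
by apply: eq_bigr => j _; case: (j \in A).
Qed.

End MatrixUnits.

Lemma cardsC_eq (T : finType) (A B : {set T}) :
  #|A| = #|B| -> #|~: A| = #|~: B|.
Proof. by move=> AB; apply/eqP; rewrite -(eqn_add2l #|A|) {2}AB !cardsC. Qed.

Lemma big_enum_val_pair (V : nmodType) (T1 T2 : finType) (G : T1 * T2 -> V) :
  (\sum_(l < #|{: T1 * T2}|) G (enum_val l) = \sum_i \sum_j G (i, j))%R.
Proof. by rewrite -(big_enum_val (A := {: T1 * T2})) pair_bigA; apply: eq_big => [|[]]. Qed.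

Section PositiveSemidefinite.
Local Open Scope ring_scope.
Local Open Scope sesquilinear_scope.
Variables (C : numClosedFieldType) (d : nat).
Implicit Types A B M : 'M[C]_d.

Lemma psd_conj M A : psd A -> psd (M *m A *m M^t*).
Proof.
move=> [hA pA]; split; first by rewrite !trmxC_mul trmxCK hA mulmxA.
by move=> v; have := pA (v *m M); rewrite trmxC_mul !mulmxA.
Qed.

Lemma psd_add A B : psd A -> psd B -> psd (A + B).
Proof.
move=> [hA pA] [hB pB]; split; first by rewrite linearD map_mxD hA hB.
by move=> v; rewrite mulmxDr mulmxDl mxE addr_ge0.
Qed.

Lemma psd_scale (c : C) A : 0 <= c -> psd A -> psd (c *: A).
Proof.
move=> c0 [hA pA]; split; first by rewrite trmxCZ hA conj_Creal // ger0_real.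
by move=> v; rewrite -scalemxAr -scalemxAl mxE mulr_ge0.
Qed.

Lemma psd_sum I (r : seq I) (F : I -> 'M[C]_d) :
  (forall i, psd (F i)) -> psd (\sum_(i <- r) F i).
Proof.
move=> hF; elim: r => [|x r IH]; last by rewrite big_cons; apply: psd_add.
rewrite big_nil; split; first by rewrite linear0 map_mx0.
by move=> v; rewrite mulmx0 mul0mx mxE.
Qed.

Lemma psd_proj A : A^t* = A -> A *m A = A -> psd A.
Proof.
move=> hA idA; split=> // v.
have -> : v *m A *m v^t* = (v *m A) *m (v *m A)^t*.
  by rewrite trmxC_mul hA !mulmxA -(mulmxA v A A) idA.
exact: mul_trmxC_ge0.
Qed.

Lemma psd_diag_ge0 A i : psd A -> 0 <= A i i.
Proof.
move=> [_ pA]; have := pA (delta_mx 0 i).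
by rewrite trmxC_delta -rowE -colE !mxE.
Qed.

Lemma psd_spectral A : psd A ->
  A = (spectralmx A)^t* *m diag_mx (spectral_diag A) *m spectralmx A.
Proof.
move=> [hA _]; rewrite -invmx_unitary ?spectral_unitarymx //.
by apply/orthomx_spectralP/normalmxP; rewrite hA.
Qed.

Lemma psd_spectral_conj A : psd A ->
  spectralmx A *m A *m (spectralmx A)^t* = diag_mx (spectral_diag A).
Proof.
move=> pA; have U := spectral_unitarymx A.
by rewrite {2}(psd_spectral pA) !mulmxA (unitarymxP U) mul1mx mulmxtVK.
Qed.

Lemma psd_spectral_ge0 A j : psd A -> 0 <= spectral_diag A 0 j.
Proof.
move=> pA; have := psd_diag_ge0 j (psd_conj (spectralmx A) pA).
by rewrite psd_spectral_conj // mxE eqxx mulr1n.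
Qed.

Lemma psd_form_eq0 A (v : 'rV[C]_d) : psd A -> (v *m A *m v^t*) 0 0 = 0 -> v *m A = 0.
Proof.
move=> pA; set P := spectralmx A; set D := spectral_diag A.
set u := v *m P^t*.
have eA : A = P^t* *m diag_mx D *m P := psd_spectral pA.
have -> : v *m A *m v^t* = u *m diag_mx D *m u^t*.
  by rewrite {1}eA /u trmxC_mul trmxCK !mulmxA.
rewrite mul_mx_diag mxE => form0.
have term j : (\matrix_(i, j) (u i j * D 0 j)) 0 j * (u^t*) j 0
              = D 0 j * (u 0 j * (u 0 j)^*).
  by rewrite !mxE mulrAC mulrC mulrA.
have uD0 j : u 0 j * D 0 j = 0.
  have /psumr_eq0P/(_ form0 j isT) : forall k, xpredT k ->
      0 <= (\matrix_(i, j) (u i j * D 0 j)) 0 k * (u^t*) k 0.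
    by move=> k _; rewrite term mulr_ge0 ?psd_spectral_ge0 ?mul_conjC_ge0.
  move=> /eqP; rewrite term mulf_eq0 mul_conjC_eq0.
  by case/orP=> /eqP->; rewrite ?mulr0 ?mul0r.
suff uD : u *m diag_mx D = 0 by rewrite eA !mulmxA -/u uD !mul0mx.
by apply/matrixP=> i j; rewrite mul_mx_diag ord1 mxE uD0 mxE.
Qed.

Lemma psd_addl_ker A B (v : 'rV[C]_d) :
  psd A -> psd B -> v *m (A + B) = 0 -> v *m A = 0.
Proof.
move=> pA pB vAB; apply: psd_form_eq0 => //.
have : (v *m (A + B) *m v^t*) 0 0 = 0 by rewrite vAB mul0mx mxE.
rewrite mulmxDr mulmxDl mxE => /eqP.
by rewrite paddr_eq0 ?(pA.2 v) ?(pB.2 v) // => /andP[/eqP].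
Qed.

Lemma psd_diag_le1 A B j : psd A -> psd B -> A + B = 1%:M -> A j j <= 1.
Proof.
move=> _ pB /(congr1 (fun M : 'M[C]_d => M j j)).
by rewrite mxE [RHS]mxE eqxx mulr1n => <-; rewrite lerDl psd_diag_ge0.
Qed.

Lemma psd_diag_orth (D : 'rV[C]_d) (N : 'M[C]_d) j :
  (forall i, 0 <= D 0 i) -> psd N -> \tr (diag_mx D *m N) = 0 ->
  D 0 j != 0 -> N j j = 0.
Proof.
move=> D0 pN tr0 Dj.
have ge0 i : xpredT i -> 0 <= (diag_mx D *m N) i i.
  by rewrite mul_diag_mx mxE mulr_ge0 ?psd_diag_ge0.
have /eqP := psumr_eq0P ge0 tr0 (i := j) isT.
by rewrite mul_diag_mx mxE mulf_eq0 (negbTE Dj) => /eqP.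
Qed.

Lemma psd_kermx_addl A B : psd A -> psd B -> (kermx (A + B) <= kermx A)%MS.
Proof.
move=> pA pB; apply/row_subP => i; apply/sub_kermxP; apply: (psd_addl_ker pA pB).
by rewrite -row_mul (sub_kermxP (submx_refl _)) row0.
Qed.

(* Without [%R] the sum under [\rank] would be read as a sum of row spaces. *)
Lemma psd_kermx_sub A B : psd A -> psd B -> (\rank (A + B)%R <= \rank A)%N ->
  (kermx A <= kermx B)%MS.
Proof.
move=> pA pB rk; have sub := psd_kermx_addl pA pB.
have [le eq_rk] := mxrank_leqif_sup sub.
have sup : (kermx A <= kermx (A + B))%MS.
  by rewrite -eq_rk eqn_leq le /= !mxrank_ker leq_sub2l.
by apply: submx_trans sup _; rewrite addrC; apply: psd_kermx_addl.
Qed.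

End PositiveSemidefinite.

Section DiagonalRank.
Local Open Scope ring_scope.
Variables (F : fieldType) (n : nat).

Lemma rank_diag_indicator (S : {set 'I_n}) :
  \rank (diag_mx (\row_j ((j \in S)%:R : F))) = #|S|.
Proof.
set I := diag_mx _.
pose M : 'M[F]_(#|S|, n) := \matrix_(i, j) ((j == enum_val i)%:R).
have MMt : M *m M^T = 1%:M.
  apply/matrixP=> i i'; rewrite !mxE (bigD1 (enum_val i)) //= big1 ?addr0.
    by rewrite !mxE eqxx mul1r (inj_eq enum_val_inj).
  by move=> x /negbTE hx; rewrite !mxE hx mul0r.
have MtM : M^T *m M = I.
  apply/matrixP=> j j'; rewrite !mxE.
  under eq_bigr do rewrite !mxE.
  rewrite -(big_enum_val (A := mem S) (fun x => (j == x)%:R * (j' == x)%:R)) /=.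
  case: (boolP (j \in S)) => jS.
    rewrite (bigD1 j) //= eqxx mul1r big1 ?addr0.
      by rewrite eq_sym; case: (j == j').
    by move=> x /andP[_ /negbTE]; rewrite eq_sym => ->; rewrite mul0r.
  rewrite big1 ?mul0rn // => x xS.
  by rewrite (_ : (j == x) = false) ?mul0r //; apply: contraNF jS => /eqP ->.
have M_free : row_free M by apply/row_freeP; exists M^T.
by rewrite -MtM mxrankMfree // mxrank_tr; apply/eqP.
Qed.

Lemma rank_diag_mx (D : 'rV[F]_n) : \rank (diag_mx D) = #|[set j | D 0 j != 0]|.
Proof.
set S := [set j | _]; rewrite -rank_diag_indicator.
set I := \row_j _.
have DI : diag_mx D = diag_mx I *m diag_mx D.
  rewrite mulmx_diag; congr diag_mx; apply/rowP=> j; rewrite !mxE inE.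
  by case: eqP => [->|_]; rewrite ?mulr0 ?mul1r.
have ID : diag_mx I = diag_mx D *m diag_mx (\row_j (D 0 j)^-1).
  rewrite mulmx_diag; congr diag_mx; apply/rowP=> j; rewrite !mxE inE.
  by case: eqP => [->|/eqP D0]; rewrite ?mul0r ?mulfV.
by apply/eqP; rewrite eqn_leq {1}DI {3}ID !mxrankM_maxl.
Qed.

End DiagonalRank.

Section SpectralSupport.
Local Open Scope ring_scope.
Local Open Scope sesquilinear_scope.
Variables (C : numClosedFieldType) (d : nat).

Definition spectral_support (A : 'M[C]_d) : {set 'I_d} :=
  [set j | spectral_diag A 0 j != 0].

Lemma psd_rank (A : 'M[C]_d) : psd A -> \rank A = #|spectral_support A|.
Proof.
move=> pA; rewrite -rank_diag_mx -psd_spectral_conj //.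
have U := spectral_unitarymx A.
have Ut : (spectralmx A)^t* \is unitarymx by rewrite trmxC_unitary.
rewrite mxrankMfree; last by rewrite /row_free mxrank_unitary.
by rewrite eqmxMfull // /row_full mxrank_unitary.
Qed.

Lemma spectral_row_ker (A : 'M[C]_d) j : psd A -> j \notin spectral_support A ->
  row j (spectralmx A) *m A = 0.
Proof.
move=> pA; rewrite inE negbK => /eqP Dj0.
have PA : spectralmx A *m A = diag_mx (spectral_diag A) *m spectralmx A.
  by rewrite -psd_spectral_conj // mulmxKtV ?spectral_unitarymx.
by rewrite -row_mul PA row_mul row_diag_mx Dj0 scale0r mul0mx.
Qed.

End SpectralSupport.

Section KrausMaps.
Local Open Scope ring_scope.
Local Open Scope sesquilinear_scope.
Variables (C : numClosedFieldType) (d n : nat) (K : 'I_n -> 'M[C]_d).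

Definition kraus_map (rho : 'M[C]_d) : 'M[C]_d := \sum_i K i *m rho *m (K i)^t*.
Definition kraus_adj (Y : 'M[C]_d) : 'M[C]_d := \sum_i (K i)^t* *m Y *m K i.

Lemma kraus_adj_psd Y : psd Y -> psd (kraus_adj Y).
Proof. by move=> pY; apply: psd_sum => i; rewrite -{2}[K i]trmxCK; apply: psd_conj. Qed.

Lemma mxtrace_kraus_adj rho Y : \tr (rho *m kraus_adj Y) = \tr (kraus_map rho *m Y).
Proof.
rewrite mulmx_sumr mulmx_suml !raddf_sum /=; apply: eq_bigr => i _.
by rewrite !mulmxA mxtrace_mulC !mulmxA.
Qed.

Hypotheses (K_tp : \sum_i (K i)^t* *m K i = 1%:M)
           (K_unital : \sum_i K i *m (K i)^t* = 1%:M).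

Lemma kraus_adj_compl Y : kraus_adj Y + kraus_adj (1%:M - Y) = 1%:M.
Proof.
rewrite -[RHS]K_tp -big_split /=; apply: eq_bigr => i _.
by rewrite -mulmxDl -mulmxDr addrC subrK mulmx1.
Qed.

Lemma mxtrace_kraus_adj1 Y : \tr (kraus_adj Y) = \tr Y.
Proof.
rewrite raddf_sum /=; under eq_bigr do rewrite mxtrace_mulC mulmxA.
by rewrite -raddf_sum /= -mulmx_suml K_unital mul1mx.
Qed.

Lemma kraus_rank_bound rho Q : psd rho -> Q^t* = Q -> Q *m Q = Q ->
  \tr (kraus_map rho *m Q) = 0 -> \tr Q <= (d - \rank rho)%:R.
Proof.
move=> p_rho hQ idQ orth.
set P := spectralmx rho; set S := spectral_support rho.
have PtP : P^t* *m P = 1%:M by apply: mulmx1C; apply/unitarymxP/spectral_unitarymx.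
set N := P *m kraus_adj Q *m P^t*.
have pN : psd N := psd_conj P (kraus_adj_psd (psd_proj hQ idQ)).
have N_le1 j : N j j <= 1.
  have hQc : (1%:M - Q)^t* = 1%:M - Q by rewrite linearB /= map_mxB trmx1 map_mx1 hQ.
  have idQc : (1%:M - Q) *m (1%:M - Q) = 1%:M - Q.
    by rewrite mulmxBl !mulmxBr !mul1mx mulmx1 idQ subrr subr0.
  apply: (psd_diag_le1 j pN (psd_conj P (kraus_adj_psd (psd_proj hQc idQc)))).
  by rewrite -mulmxDl -mulmxDr kraus_adj_compl mulmx1 (unitarymxP (spectral_unitarymx _)).
have N_supp j : j \in S -> N j j = 0.
  rewrite inE; apply: psd_diag_orth => //; first by move=> i; exact: psd_spectral_ge0.
  rewrite -psd_spectral_conj // /N !mulmxA mxtrace_mulC !mulmxA -/P PtP mul1mx.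
  by rewrite -(mulmxA rho) PtP mulmx1 mxtrace_kraus_adj.
rewrite -mxtrace_kraus_adj1 -[kraus_adj Q]mul1mx -PtP -mulmxA mxtrace_mulC -/N.
rewrite psd_rank // -[d in (d - _)%N](card_ord d) -(cardsC S) addKn -sum1_card natr_sum.
rewrite /mxtrace (bigID (mem S)) /= big1 ?add0r //.
rewrite (eq_bigl (mem (~: S))) => [|i]; last by rewrite /= in_setC.
by apply: ler_sum => i _.
Qed.

Lemma kraus_rank_le_pid rho (k : nat) : psd rho -> (k <= d)%N ->
  kraus_map rho = (k%:R)^-1 *: pid_mx k -> (\rank rho <= k)%N.
Proof.
move=> p_rho kd E_rho.
have hQ : (copid_mx k : 'M[C]_d)^t* = copid_mx k.
  by rewrite /copid_mx linearB /= trmx1 tr_pid_mx map_mxB map_mx1 map_pid_mx.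
have orth : \tr (kraus_map rho *m copid_mx k) = 0.
  by rewrite E_rho -scalemxAl mul_pid_mx_copid // scaler0 mxtrace0.
have := kraus_rank_bound p_rho hQ (copid_mx_id _ kd) orth.
rewrite /copid_mx raddfB /= mxtrace1 mxtrace_pid // -natrB // ler_nat.
by have := rank_leq_row rho; lia.
Qed.

End KrausMaps.

Section StochasticChannel.
Local Open Scope ring_scope.
Local Open Scope sesquilinear_scope.
Variables (C : numClosedFieldType) (d : nat) (P : 'M[C]_d) (t : 'I_d -> 'I_d -> C).
Hypotheses (P_unitary : P \is unitarymx) (t_ge0 : forall i j, 0 <= t i j)
  (t_row : forall i, \sum_j t i j = 1) (t_col : forall j, \sum_i t i j = 1).

Definition stochastic_kraus (p : 'I_d * 'I_d) : 'M[C]_d :=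
  sqrtC (t p.1 p.2) *: (delta_mx p.1 p.2 *m P).

Lemma stochastic_kraus_conj i j rho :
  stochastic_kraus (i, j) *m rho *m (stochastic_kraus (i, j))^t*
  = (t i j * (P *m rho *m P^t*) j j) *: delta_mx i i.
Proof.
rewrite /stochastic_kraus /= trmxCZ trmxC_mul trmxC_delta -!scalemxAl -scalemxAr.
by rewrite scalerA sqrtC_mul_conj // -scalerA -delta_mx_conj !mulmxA.
Qed.

Lemma stochastic_kraus_adj_mul i j :
  (stochastic_kraus (i, j))^t* *m stochastic_kraus (i, j)
  = t i j *: (P^t* *m delta_mx j j *m P).
Proof.
rewrite /stochastic_kraus /= trmxCZ trmxC_mul trmxC_delta -scalemxAl -scalemxAr scalerA.
by rewrite mulrC sqrtC_mul_conj // !mulmxA -(mulmxA _ (delta_mx j i)) mul_delta_mx.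
Qed.

Lemma stochastic_kraus_tp :
  \sum_i \sum_j (stochastic_kraus (i, j))^t* *m stochastic_kraus (i, j) = 1%:M.
Proof.
rewrite exchange_big /=; under eq_bigr do under eq_bigr do rewrite stochastic_kraus_adj_mul.
under eq_bigr do rewrite -scaler_suml t_col scale1r.
by rewrite -mulmx_suml -mulmx_sumr -mx1_sum_delta mulmx1; apply/mulmx1C/unitarymxP.
Qed.

Lemma stochastic_kraus_unital :
  \sum_i \sum_j stochastic_kraus (i, j) *m (stochastic_kraus (i, j))^t* = 1%:M.
Proof.
under eq_bigr do under eq_bigr do
  rewrite -[X in X *m _]mulmx1 stochastic_kraus_conj mulmx1 (unitarymxP P_unitary).
under eq_bigr do under eq_bigr do rewrite mxE eqxx mulr1.
by rewrite mx1_sum_delta; apply: eq_bigr => i _; rewrite -scaler_suml t_row scale1r.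
Qed.

Lemma stochastic_channel : exists n (K : 'I_n -> 'M[C]_d),
  [/\ \sum_i (K i)^t* *m K i = 1%:M, \sum_i K i *m (K i)^t* = 1%:M &
    forall rho, kraus_map K rho
      = \sum_i (\sum_j t i j * (P *m rho *m P^t*) j j) *: delta_mx i i].
Proof.
exists #|{: 'I_d * 'I_d}|, (fun l => stochastic_kraus (enum_val l)); split.
- by rewrite (big_enum_val_pair (fun p => (stochastic_kraus p)^t* *m stochastic_kraus p))
    stochastic_kraus_tp.
- by rewrite (big_enum_val_pair (fun p => stochastic_kraus p *m (stochastic_kraus p)^t*))
    stochastic_kraus_unital.
move=> rho; rewrite /kraus_map (big_enum_val_pair
  (fun p => stochastic_kraus p *m rho *m (stochastic_kraus p)^t*)).
apply: eq_bigr => i _; rewrite scaler_suml.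
by apply: eq_bigr => j _; rewrite stochastic_kraus_conj.
Qed.

End StochasticChannel.

Section SupportChannel.
Local Open Scope ring_scope.
Local Open Scope sesquilinear_scope.
Variables (C : numClosedFieldType) (d : nat).
Implicit Types (S T : {set 'I_d}) (i j : 'I_d).

Definition block_stochastic (S T : {set 'I_d}) (i j : 'I_d) : C :=
  (i \in T)%:R * (j \in S)%:R / #|S|%:R + (i \in ~: T)%:R * (j \in ~: S)%:R / #|~: S|%:R.

Lemma block_stochastic_ge0 S T i j : 0 <= block_stochastic S T i j.
Proof. by rewrite addr_ge0 // !mulr_ge0 ?invr_ge0 ?ler0n. Qed.

Lemma block_stochastic_row S T i : #|S| = #|T| -> \sum_j block_stochastic S T i j = 1.
Proof.
move=> ST; rewrite big_split /= -!mulr_suml -!mulr_sumr !sum_indicator.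
have card_gt0 (A B : {set 'I_d}) : #|A| = #|B| -> i \in B -> (#|A|%:R : C) != 0.
  by move=> AB iB; rewrite pnatr_eq0 -lt0n AB; apply/card_gt0P; exists i.
case: (boolP (i \in T)) => iT.
  by rewrite in_setC iT /= mulr1n mulr0n !mul0r addr0 mul1r mulfV ?(card_gt0 _ _ ST).
rewrite in_setC (negbTE iT) /= mulr1n mulr0n !mul0r add0r mul1r.
by rewrite mulfV ?(card_gt0 _ _ (cardsC_eq ST)) ?in_setC.
Qed.

Lemma block_stochasticC S T i j : #|S| = #|T| ->
  block_stochastic S T i j = block_stochastic T S j i.
Proof.
move=> ST; rewrite /block_stochastic ST (cardsC_eq ST).
by congr (_ + _); congr (_ / _); rewrite mulrC.
Qed.

Lemma maximally_mixed_channel (P : 'M[C]_d) S : P \is unitarymx ->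
  exists n (K : 'I_n -> 'M[C]_d),
  [/\ \sum_i (K i)^t* *m K i = 1%:M, \sum_i K i *m (K i)^t* = 1%:M &
    forall rho, \tr rho = 1 -> (forall j, j \notin S -> (P *m rho *m P^t*) j j = 0) ->
      kraus_map K rho = (#|S|%:R)^-1 *: pid_mx #|S|].
Proof.
move=> P_unitary; set T := [set i : 'I_d | (i < #|S|)%N].
have Sd : (#|S| <= d)%N by rewrite -[d in (_ <= d)%N]card_ord max_card.
have ST : #|S| = #|T|.
  by rewrite -[RHS](rank_diag_indicator C) /T -pid_mx_indicator rank_pid_mx.
have col_sum j : \sum_i block_stochastic S T i j = 1.
  under eq_bigr do rewrite block_stochasticC //.
  exact: block_stochastic_row (esym ST).
have [n [K [K_tp K_unital K_map]]] := stochastic_channel P_unitary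
  (@block_stochastic_ge0 S T) (fun i => block_stochastic_row i ST) col_sum.
exists n, K; split => // rho tr1 supp.
set X := P *m rho *m P^t*.
have trX : \sum_j X j j = 1.
  rewrite -tr1 -/(mxtrace X) /X mxtrace_mulC mulmxA.
  by rewrite (mulmx1C (unitarymxP P_unitary)) mul1mx.
rewrite K_map pid_mx_indicator diag_mx_sum_delta scaler_sumr; apply: eq_bigr => i _.
rewrite mxE scalerA; congr (_ *: _).
have term j : block_stochastic S T i j * X j j = (i \in T)%:R / #|S|%:R * X j j.
  rewrite /block_stochastic !in_setC; case: (boolP (j \in S)) => jS /=.
    by rewrite mulr1n mulr0n mulr1 mulr0 mul0r addr0.
  by rewrite supp // !mulr0.
by rewrite -/X -/T (eq_bigr _ (fun j _ => term j)) -mulr_sumr trX mulr1 mulrC.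
Qed.

End SupportChannel.

Section ConvexHull.
Local Open Scope ring_scope.
Local Open Scope sesquilinear_scope.
Variables (C : numClosedFieldType) (d : nat) (V : 'M[C]_d -> Prop).

Lemma conv_hull_subset rho : V rho -> conv_hull V rho.
Proof.
move=> Vrho; exists 1%N, (fun=> 1), (fun=> rho).
by rewrite !big_ord1 scale1r.
Qed.

Lemma conv_hull_density rho :
  (forall r, V r -> density r) -> conv_hull V rho -> density rho.
Proof.
move=> hV [n [w [r [w0 [w1 [rV ->]]]]]]; split.
  by apply: psd_sum => i; apply: psd_scale => //; exact: (hV _ (rV i)).1.
rewrite raddf_sum -w1 /=; apply: eq_bigr => i _.
by rewrite mxtraceZ (hV _ (rV i)).2 mulr1.
Qed.

Lemma conv_hull_midpoint rho0 rho :
  conv_hull V rho0 -> V rho -> conv_hull V (2^-1 *: rho0 + 2^-1 *: rho).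
Proof.
move=> [n [w [r [w0 [w1 [rV ->]]]]]] Vrho.
pose w' (i : 'I_n.+1) := if unlift ord0 i is Some j then w j / 2 else 2^-1.
pose r' (i : 'I_n.+1) := if unlift ord0 i is Some j then r j else rho.
exists n.+1, w', r'; split; [|split; [|split]].
- move=> i; rewrite /w'; case: unliftP => [j _|_]; last by rewrite invr_ge0 ler0n.
  by rewrite mulr_ge0 // invr_ge0 ler0n.
- rewrite big_ord_recl /w' unlift_none.
  under eq_bigr do rewrite liftK.
  by rewrite -mulr_suml w1 mul1r -mulr2n -[_ *+ 2]mulr_natr mulVf ?pnatr_eq0.
- by move=> i; rewrite /r'; case: unliftP.
rewrite big_ord_recl /w' /r' unlift_none addrC scaler_sumr; congr (_ + _).
by apply: eq_bigr => i _; rewrite !liftK scalerA mulrC.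
Qed.

Lemma kraus_map_conv_hull n (K : 'I_n -> 'M[C]_d) (c rho : 'M[C]_d) :
  conv_hull V rho -> (forall r, V r -> kraus_map K r = c) -> kraus_map K rho = c.
Proof.
move=> [m [w [r [w0 [w1 [rV ->]]]]]] Kc; rewrite /kraus_map.
under eq_bigr do rewrite mulmx_sumr mulmx_suml.
rewrite exchange_big /= -[c]scale1r -w1 scaler_suml; apply: eq_bigr => i _.
rewrite -(Kc _ (rV i)) /kraus_map scaler_sumr; apply: eq_bigr => l _.
by rewrite -scalemxAr -scalemxAl.
Qed.

Lemma conv_hull_max_rank : spec V -> exists rho0, conv_hull V rho0 /\
  forall rho, conv_hull V rho -> (\rank rho <= \rank rho0)%N.
Proof.
move=> [_ [r1 Vr1]].
pose P m := `[< exists rho, conv_hull V rho /\ \rank rho = m >].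
have exP : exists m, P m.
  by exists (\rank r1); apply/asboolP; exists r1; split => //; apply: conv_hull_subset.
have ubP m : P m -> (m <= d)%N by move=> /asboolP[rho [_ <-]]; apply: rank_leq_row.
case: (ex_maxnP exP ubP) => m /asboolP[rho0 [h0 <-]] rho0_max.
by exists rho0; split => // rho hrho; apply: rho0_max; apply/asboolP; exists rho.
Qed.

Lemma max_rank_support rho0 rho j :
  (forall r, V r -> density r) -> conv_hull V rho0 ->
  (forall s, conv_hull V s -> (\rank s <= \rank rho0)%N) -> V rho ->
  j \notin spectral_support rho0 ->
  (spectralmx rho0 *m rho *m (spectralmx rho0)^t*) j j = 0.
Proof.
move=> hV h0 rho0_max Vrho jS.
have p_rho0 := (conv_hull_density hV h0).1.
have half_ge0 : 0 <= (2^-1 : C) by rewrite invr_ge0 ler0n.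
have half_neq0 : (2^-1 : C) != 0 by rewrite invr_eq0 pnatr_eq0.
have ker : (kermx (2^-1 *: rho0) <= kermx (2^-1 *: rho))%MS.
  apply: psd_kermx_sub; rewrite ?(eqmx_scale _ half_neq0).
  - exact: psd_scale.
  - exact: psd_scale (hV _ Vrho).1.
  exact: rho0_max (conv_hull_midpoint h0 Vrho).
set f := row j (spectralmx rho0).
have f_rho0 : f *m (2^-1 *: rho0) = 0.
  by rewrite -scalemxAr spectral_row_ker ?scaler0.
have : f *m (2^-1 *: rho) = 0 by apply/sub_kermxP; apply: submx_trans ker; apply/sub_kermxP.
rewrite -scalemxAr => /eqP; rewrite scaler_eq0 (negbTE half_neq0) => /eqP f_rho.
have -> : forall M : 'M[C]_d, M j j = row j M 0 j by move=> M; rewrite mxE.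
by rewrite !row_mul -/f f_rho !mul0mx mxE.
Qed.

End ConvexHull.

Section Conversions.
Local Open Scope ring_scope.
Variables (C : numClosedFieldType) (d : nat) (V : 'M[C]_d -> Prop).

Lemma density_rank_gt0 (rho : 'M[C]_d) : density rho -> (0 < \rank rho)%N.
Proof.
move=> [_ tr1]; rewrite lt0n mxrank_eq0; apply: contra_eqN tr1 => /eqP->.
by rewrite mxtrace0 eq_sym oner_eq0.
Qed.

Lemma converts_rank_le rho0 (k : nat) : psd rho0 -> conv_hull V rho0 -> (k <= d)%N ->
  converts V (currency_set (CurK k)) -> (\rank rho0 <= k)%N.
Proof.
move=> p_rho0 h0 kd [E [[n [K [K_tp [K_unital EK]]]] VE]].
apply: (kraus_rank_le_pid K_tp K_unital p_rho0 kd).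
by apply: (kraus_map_conv_hull h0) => r Vr; rewrite /kraus_map -EK; apply: VE.
Qed.

Lemma converts_max_rank rho0 : (forall r, V r -> density r) -> conv_hull V rho0 ->
  (forall s, conv_hull V s -> (\rank s <= \rank rho0)%N) ->
  converts V (currency_set (CurK (\rank rho0))).
Proof.
move=> hV h0 rho0_max; have p_rho0 := (conv_hull_density hV h0).1.
have [n [K [K_tp K_unital K_map]]] :=
  maximally_mixed_channel (spectral_support rho0) (spectral_unitarymx rho0).
exists (kraus_map K); split; first by exists n, K.
move=> rho Vrho /=; rewrite /Pi (psd_rank p_rho0) K_map //; first exact: (hV _ Vrho).2.
by move=> j; apply: max_rank_support hV h0 rho0_max Vrho.
Qed.

End Conversions.

(* Imported only now: Reals rebinds the [%N] delimiter used above for [nat]. *)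
From Stdlib Require Import Reals Lra.

Lemma log2_le_nat (a b : nat) : (0 < a)%N -> (a <= b)%N -> Rle (log2 (INR a)) (log2 (INR b)).
Proof.
move=> /ssrnat.leP a_gt0 /ssrnat.leP ab; rewrite /log2 /Rdiv.
apply: Rmult_le_compat_r.
  by left; apply: Rinv_0_lt_compat; rewrite -ln_1; apply: ln_increasing; lra.
have INR_a : Rlt 0 (INR a) by apply: lt_0_INR.
by case: (le_INR _ _ ab) => [lt|->]; [left; apply: ln_increasing | apply: Rle_refl].
Qed.

Theorem mainTheorem13 (C : numClosedFieldType) (d : nat) (hd : (0 < d)%N)
  (V : 'M[C]_d -> Prop) (hV : spec V) :
  exists rho0 : 'M[C]_d,
    conv_hull V rho0 /\
    (forall rho, conv_hull V rho -> Rle (H0 rho) (H0 rho0)) /\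
    is_lub (yield_set V) (Rminus (log2 (INR d)) (H0 rho0)).
Proof.
have [hV_density _] := hV.
have [rho0 [h0 rho0_max]] := conv_hull_max_rank hV.
have rho0_density := conv_hull_density hV_density h0.
have r_gt0 := density_rank_gt0 rho0_density.
have r_le_d := rank_leq_row rho0.
exists rho0; split => //; split.
  move=> rho hrho; apply: log2_le_nat (rho0_max _ hrho).
  exact: density_rank_gt0 (conv_hull_density hV_density hrho).
split.
- move=> y [[k|] [hc [conv ->]]] /=.
  + case/andP: hc => _ kd.
    have := log2_le_nat r_gt0 (converts_rank_le rho0_density.1 h0 kd conv).
    rewrite /H0; lra.
  + have := log2_le_nat r_gt0 r_le_d; rewrite /H0; lra.
- move=> b hb; apply: hb; exists (CurK (\rank rho0)); split.
    by rewrite /= r_gt0 r_le_d.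
  by split; first exact: converts_max_rank.
Qed.
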